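(* Let $n\ge1$, let $\vec{k}=\{k_1<k_2<\dots<k_t\}\subseteq[n]$ be non-empty with $k_i+1<k_{i+1}$ for $1\le i<t$, and let $N$ be a $\vec k$-complicial $n$-simplex. Then the inclusion $\Lambda^{\vec k}N\subseteq N$ is an anodyne extension; if moreover $0<k_1$ and $k_t<n$, it is an inner anodyne extension.
   Context: Conventions: $[n]=\{0<\dots<n\}$; simplicial operators are order-preserving maps; $\delta_i$ is the face operator omitting $i$. A stratified set is a simplicial set with a set of thin simplices containing every degenerate simplex and no $0$-simplex; stratified maps preserve thinness (category $\mathbf{Strat}$). $\Delta[n]$ is the standard $n$-simplex with only degenerate simplices thin. A stratified subset $U\subseteq X$ is regular if its thin simplices are exactly its simplices thin in $X$; an entire superset of $\Delta[n]$ is a stratified set with the same underlying simplicial set as $\Delta[n]$ (and more thin simplices). For $0\le k\le n$: $\Delta^k[n]$ is $\Delta[n]$ in which $\alpha:[r]\to[n]$ is thin iff degenerate or its image contains $\{k-1,k,k+1\}\cap[n]$; $\Lambda^k[n]$ is the regular subset of $\alpha$ with $\mathrm{im}(\alpha)\cup\{k\}\neq[n]$; $\Delta^k[n]'$ is $\Delta^k[n]$ with additionally all $(n-1)$-faces $\delta_i$, $i\ne k$, thin; $\Delta^k[n]''$ is $\Delta^k[n]$ with all $(n-1)$-faces thin. The elementary anodyne extensions are $\Lambda^k[n]\subseteq\Delta^k[n]$ ($n\ge1$) and $\Delta^k[n]'\subseteq\Delta^k[n]''$ ($n\ge2$), inner if $0<k<n$. An (inner) anodyne extension is a map in the closure of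 pushouts of (inner) elementary anodyne extensions under transfinite composition. A non-degenerate simplex $\alpha:[r]\to[n]$ is $k$-admissible if its image contains $\{k-1,k,k+1\}\cap[n]$. For $\vec k$ as in the claim, an entire superset $N$ of $\Delta[n]$ is a $\vec k$-complicial $n$-simplex if for each $k_i\in\vec k$ and each $k_i$-admissible $\alpha:[r]\to[n]$: (a) $\alpha$ is thin in $N$; (b) if $l\in[r]$ is the integer with $\alpha(l)=k_i$ and $\alpha\circ\delta_l$ is thin in $N$, then $\alpha\circ\delta_j$ is thin in $N$ for each $j\in\{l-1,l+1\}\cap[r]$. $\Lambda^{\vec k}N$ is the regular subset of $N$ consisting of those simplices $\alpha$ with $\mathrm{im}(\alpha)\cup\vec k\ne[n]$. *)

From mathcomp Require Import all_boot zify.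
Set Implicit Arguments.
Unset Strict Implicit.
Unset Printing Implicit Defensive.

Definition monob m n (f : {ffun 'I_m.+1 -> 'I_n.+1}) : bool :=
  [forall i : 'I_m.+1, forall j : 'I_m.+1, (i <= j) ==> (f i <= f j)].

Definition sop (m n : nat) := {f : {ffun 'I_m.+1 -> 'I_n.+1} | monob f}.

Definition ap m n (f : sop m n) : 'I_m.+1 -> 'I_n.+1 := fun i => val f i.

Lemma ap_mono m n (f : sop m n) (i j : 'I_m.+1) : i <= j -> ap f i <= ap f j.
Proof.
by move: (valP f) => /forallP /(_ i) /forallP /(_ j) /implyP.
Qed.

Lemma monob_comp m n p (g : sop n p) (f : sop m n) :
  monob [ffun i => ap g (ap f i)].
Proof.
apply/forallP => i; apply/forallP => j; apply/implyP => hij; rewrite !ffunE.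
by apply: ap_mono; apply: ap_mono.
Qed.

Definition sop_comp m n p (g : sop n p) (f : sop m n) : sop m p :=
  exist (@monob m p) _ (monob_comp g f).

Lemma monob_id n : monob [ffun i : 'I_n.+1 => i].
Proof. by apply/forallP => i; apply/forallP => j; rewrite !ffunE; apply/implyP. Qed.

Definition sop_id n : sop n n := exist (@monob n n) _ (monob_id n).

Lemma monob_face r (l : 'I_r.+2) : monob [ffun j : 'I_r.+1 => lift l j].
Proof.
apply/forallP => i; apply/forallP => j; apply/implyP => hij; rewrite !ffunE.
by rewrite /= leq_bump2.
Qed.

Definition face r (l : 'I_r.+2) : sop r r.+1 := exist (@monob r r.+1) _ (monob_face l).

Lemma sop_compA m n p q (h : sop p q) (g : sop n p) (f : sop m n) :
  sop_comp h (sop_comp g f) = sop_comp (sop_comp h g) f.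
Proof. apply: val_inj => /=; apply/ffunP => i; rewrite !ffunE /ap /= ?ffunE //. Qed.

Lemma sop_comp1 m n (f : sop m n) : sop_comp f (sop_id m) = f.
Proof. apply: val_inj => /=; apply/ffunP => i; rewrite !ffunE /ap /= ?ffunE //. Qed.

Record sSet := SSet {
  simp :> nat -> Type;
  act : forall m p, sop m p -> simp p -> simp m;
  act_id : forall p (x : simp p), act (sop_id p) x = x;
  act_comp : forall m p q (f : sop m p) (g : sop p q) (x : simp q),
      act (sop_comp g f) x = act f (act g x)
}.
Arguments act {s m p}.

Definition degen (X : sSet) m (x : X m) : Prop :=
  exists p (s : sop m p) (y : X p), p < m /\ x = act s y.

Definition Delta_sSet (n : nat) : sSet :=
  @SSet (fun m => sop m n) (fun m p f a => sop_comp a f)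
        (fun p a => sop_comp1 a)
        (fun m p q f g a => sop_compA a g f).

Record Strat := MkStrat {
  ss :> sSet;
  thin : forall m, ss m -> Prop;
  thin_degen : forall m (x : ss m), degen x -> thin x;
  thin0 : forall x : ss 0, ~ thin x
}.
Arguments thin {s m}.

Record smap (X Y : Strat) := MkSmap {
  sm :> forall m, X m -> Y m;
  sm_nat : forall m p (f : sop m p) (x : X p), sm (act f x) = act f (sm x);
  sm_thin : forall m (x : X m), thin x -> thin (sm x)
}.

Definition smap_eq (X Y : Strat) (f g : smap X Y) : Prop :=
  forall m (x : X m), f m x = g m x.

Lemma smap_comp_nat (X Y Z : Strat) (g : smap Y Z) (f : smap X Y) m p
  (s : sop m p) (x : X p) : g m (f m (act s x)) = act s (g p (f p x)).
Proof. by rewrite sm_nat sm_nat. Qed.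

Lemma smap_comp_thin (X Y Z : Strat) (g : smap Y Z) (f : smap X Y) m
  (x : X m) : thin x -> thin (g m (f m x)).
Proof. by move=> h; apply: sm_thin; apply: sm_thin. Qed.

Definition smap_comp (X Y Z : Strat) (g : smap Y Z) (f : smap X Y) : smap X Z :=
  MkSmap (smap_comp_nat g f) (smap_comp_thin g f).

Definition is_pushout (A B C D : Strat) (f : smap A B) (g : smap A C)
  (h : smap B D) (k : smap C D) : Prop :=
  smap_eq (smap_comp h f) (smap_comp k g) /\
  forall (E : Strat) (u : smap B E) (v : smap C E),
    smap_eq (smap_comp u f) (smap_comp v g) ->
    exists w : smap D E,
      [/\ smap_eq (smap_comp w h) u, smap_eq (smap_comp w k) v &
          forall w' : smap D E, smap_eq (smap_comp w' h) u ->
            smap_eq (smap_comp w' k) v -> smap_eq w' w].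

Record wellorder := MkWO {
  wo :> Type;
  wle : wo -> wo -> Prop;
  wle_refl : forall i, wle i i;
  wle_antisym : forall i j, wle i j -> wle j i -> i = j;
  wle_trans : forall i j k, wle i j -> wle j k -> wle i k;
  wle_total : forall i j, wle i j \/ wle j i;
  wlt_wf : well_founded (fun i j => wle i j /\ i <> j);
  wbot : wo;
  wbot_le : forall i, wle wbot i
}.

Definition wlt (W : wellorder) (i j : W) := wle i j /\ i <> j.

Definition wsucc (W : wellorder) (i j : W) :=
  wlt i j /\ forall l, ~ (wlt i l /\ wlt l j).

Definition wlimit (W : wellorder) (j : W) :=
  j <> wbot W /\ forall i, wlt i j -> exists l, wlt i l /\ wlt l j.

Record chain (W : wellorder) := MkChain {
  cobj :> W -> Strat;
  cmap : forall i j, wle i j -> smap (cobj i) (cobj j);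
  cmap_id : forall i (h : wle i i) m (x : cobj i m), cmap h m x = x;
  cmap_comp : forall i j k (hij : wle i j) (hjk : wle j k) (hik : wle i k),
      smap_eq (cmap hik) (smap_comp (cmap hjk) (cmap hij))
}.
Arguments cmap {W} c {i j}.

Definition is_colim (W : wellorder) (X : chain W) (P : W -> Prop) (Y : Strat)
  (c : forall i, P i -> smap (X i) Y) : Prop :=
  (forall i j (Pi : P i) (Pj : P j) (h : wle i j),
      smap_eq (smap_comp (c j Pj) (cmap X h)) (c i Pi)) /\
  forall (E : Strat) (e : forall i, P i -> smap (X i) E),
    (forall i j (Pi : P i) (Pj : P j) (h : wle i j),
        smap_eq (smap_comp (e j Pj) (cmap X h)) (e i Pi)) ->
    exists u : smap Y E,
      (forall i (Pi : P i), smap_eq (smap_comp u (c i Pi)) (e i Pi)) /\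
      forall u' : smap Y E,
        (forall i (Pi : P i), smap_eq (smap_comp u' (c i Pi)) (e i Pi)) ->
        smap_eq u' u.

Arguments is_colim {W} X P Y c.

Definition continuous_chain (W : wellorder) (X : chain W) : Prop :=
  forall j (Hj : wlimit j),
    is_colim X (fun i => wlt i j) (X j)
             (fun i (h : wlt i j) => cmap X (proj1 h)).

Section DStrat.
Variable n : nat.
Variable S : forall m, sop m n -> bool.
Variable T : forall m, sop m n -> Prop.
Hypothesis HS : forall m p (f : sop m p) (a : sop p n), S a -> S (sop_comp a f).
Hypothesis Hdeg : forall m (a : sop m n), @degen (Delta_sSet n) _ a -> T a.
Hypothesis H0 : forall a : sop 0 n, ~ T a.

Definition dsimp m := {a : sop m n | S a}.

Definition dact m p (f : sop m p) (x : dsimp p) : dsimp m :=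
  exist _ (sop_comp (val x) f) (HS f (valP x)).

Lemma dact_id p (x : dsimp p) : dact (sop_id p) x = x.
Proof. by apply: val_inj; rewrite /= sop_comp1. Qed.

Lemma dact_comp m p q (f : sop m p) (g : sop p q) (x : dsimp q) :
  dact (sop_comp g f) x = dact f (dact g x).
Proof. by apply: val_inj; rewrite /= sop_compA. Qed.

Definition dsSet : sSet := SSet dact_id dact_comp.

Lemma dthin_degen m (x : dsSet m) : degen x -> T (val x).
Proof.
case=> p [s [y [hp ->]]]; apply: Hdeg.
by exists p, s, (val y).
Qed.

Lemma dthin0 (x : dsSet 0) : ~ T (val x).
Proof. exact: H0. Qed.

Definition dstrat : Strat :=
  @MkStrat dsSet (fun m (x : dsSet m) => T (val x)) dthin_degen dthin0.

End DStrat.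

Section DIncl.
Variable n : nat.
Variables (S1 S2 : forall m, sop m n -> bool) (T1 T2 : forall m, sop m n -> Prop).
Variables (HS1 : forall m p (f : sop m p) (a : sop p n), S1 a -> S1 (sop_comp a f))
          (HS2 : forall m p (f : sop m p) (a : sop p n), S2 a -> S2 (sop_comp a f)).
Variables (Hdeg1 : forall m (a : sop m n), @degen (Delta_sSet n) _ a -> T1 a)
          (Hdeg2 : forall m (a : sop m n), @degen (Delta_sSet n) _ a -> T2 a).
Variables (H01 : forall a : sop 0 n, ~ T1 a) (H02 : forall a : sop 0 n, ~ T2 a).
Hypothesis HS12 : forall m (a : sop m n), S1 a -> S2 a.
Hypothesis HT12 : forall m (a : sop m n), T1 a -> T2 a.

Definition dincl_fun m (x : dstrat HS1 Hdeg1 H01 m) : dstrat HS2 Hdeg2 H02 m :=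
  exist _ (val x) (HS12 (valP x)).

Lemma dincl_nat m p (f : sop m p) (x : dstrat HS1 Hdeg1 H01 p) :
  dincl_fun (act f x) = act f (dincl_fun x).
Proof. exact: val_inj. Qed.

Lemma dincl_thin m (x : dstrat HS1 Hdeg1 H01 m) : thin x -> thin (dincl_fun x).
Proof. exact: HT12. Qed.

Definition dincl : smap (dstrat HS1 Hdeg1 H01) (dstrat HS2 Hdeg2 H02) :=
  MkSmap dincl_nat dincl_thin.

End DIncl.
Arguments dincl {n S1 S2 T1 T2 HS1 HS2 Hdeg1 Hdeg2 H01 H02}.

(* image of a contains {k-1,k,k+1} cap [n]   (note k.-1 = 0 when k = 0) *)
Definition adm n k m (a : sop m n) : Prop :=
  forall j : 'I_n.+1, k.-1 <= j <= k.+1 -> exists i, ap a i = j.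

Definition hornS n (K : pred nat) m (a : sop m n) : bool :=
  ~~ [forall j : 'I_n.+1, [exists i : 'I_m.+1, ap a i == j] || K j].

Definition is_face n m (a : sop m n) (i : 'I_n.+1) : Prop :=
  m.+1 = n /\ forall j : 'I_m.+1, val (ap a j) = bump i j.

Lemma allS n m (a : sop m n) : true. Proof. by []. Qed.

Lemma allS_closed n m p (f : sop m p) (a : sop p n) :
  (fun m (_ : sop m n) => true) p a -> (fun m (_ : sop m n) => true) m (sop_comp a f).
Proof. by []. Qed.

Lemma hornS_closed n K m p (f : sop m p) (a : sop p n) :
  hornS K a -> hornS K (sop_comp a f).
Proof.
apply: contra => /forallP H; apply/forallP => j.
case/orP: (H j) => [/existsP [i /eqP <-]|->]; last by rewrite orbT.
by apply/orP; left; apply/existsP; exists (ap f i); rewrite /ap /= ffunE.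
Qed.

Lemma adm0 n k (Hn : 0 < n) (Hk : k <= n) (a : sop 0 n) : ~ adm k a.
Proof.
move=> H.
have key : forall x y, x <= n -> y <= n -> k.-1 <= x <= k.+1 ->
    k.-1 <= y <= k.+1 -> x = y.
  move=> x y hx hy Hx Hy.
  have [|i1 e1] := H (inord x); first by rewrite inordK.
  have [|i2 e2] := H (inord y); first by rewrite inordK.
  rewrite (ord1 i1) in e1; rewrite (ord1 i2) in e2.
  by rewrite -(@inordK n x hx) -(@inordK n y hy) -e1 -e2.
have H1 : k.-1 <= k <= k.+1 by apply/andP; split; lia.
have H2 : k.-1 <= k.+1 <= k.+1 by apply/andP; split; lia.
have H3 : k.-1 <= k.-1 <= k.+1 by apply/andP; split; lia.
case: (ltnP k n) => hk.
- by have := key k k.+1 Hk hk H1 H2; lia.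
- have hk1 : k.-1 <= n by lia.
  by have := key k k.-1 Hk hk1 H1 H3; lia.
Qed.

Lemma degen0 n (a : sop 0 n) : ~ @degen (Delta_sSet n) _ a.
Proof. by case=> p [s [y []]]. Qed.

Section Elementary.
Variables (n k : nat).

Definition TK m (a : sop m n) : Prop := @degen (Delta_sSet n) _ a \/ adm k a.
Definition TK' m (a : sop m n) : Prop :=
  TK a \/ exists i : 'I_n.+1, (i : nat) != k /\ is_face a i.
Definition TK'' m (a : sop m n) : Prop :=
  TK a \/ exists i : 'I_n.+1, is_face a i.

Lemma TK_degen m (a : sop m n) : @degen (Delta_sSet n) _ a -> TK a.
Proof. by left. Qed.
Lemma TK'_degen m (a : sop m n) : @degen (Delta_sSet n) _ a -> TK' a.
Proof. by left; left. Qed.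
Lemma TK''_degen m (a : sop m n) : @degen (Delta_sSet n) _ a -> TK'' a.
Proof. by left; left. Qed.

Lemma TK0 (Hn : 0 < n) (Hk : k <= n) (a : sop 0 n) : ~ TK a.
Proof. by case=> [/degen0|/adm0]; apply. Qed.

Lemma TK'0 (Hn : 1 < n) (Hk : k <= n) (a : sop 0 n) : ~ TK' a.
Proof.
case=> [|[i [_ [e _]]]]; first exact: TK0 (ltnW Hn) Hk a.
by rewrite -e in Hn.
Qed.

Lemma TK''0 (Hn : 1 < n) (Hk : k <= n) (a : sop 0 n) : ~ TK'' a.
Proof.
case=> [|[i [e _]]]; first exact: TK0 (ltnW Hn) Hk a.
by rewrite -e in Hn.
Qed.

Definition allS_n := @allS_closed n.

Definition DeltaK (Hn : 0 < n) (Hk : k <= n) : Strat :=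
  dstrat allS_n TK_degen (TK0 Hn Hk).
Definition LamK (Hn : 0 < n) (Hk : k <= n) : Strat :=
  dstrat (@hornS_closed n (pred1 k)) TK_degen (TK0 Hn Hk).
Definition DeltaK' (Hn : 1 < n) (Hk : k <= n) : Strat :=
  dstrat allS_n TK'_degen (TK'0 Hn Hk).
Definition DeltaK'' (Hn : 1 < n) (Hk : k <= n) : Strat :=
  dstrat allS_n TK''_degen (TK''0 Hn Hk).

Lemma hornS_all m (a : sop m n) : hornS (pred1 k) a -> true.
Proof. by []. Qed.
Lemma all_all m (a : sop m n) : true -> true.
Proof. by []. Qed.
Lemma TK_TK m (a : sop m n) : TK a -> TK a.
Proof. by []. Qed.
Lemma TK'_TK'' m (a : sop m n) : TK' a -> TK'' a.
Proof. by case=> [h|[i [_ h]]]; [left|right; exists i]. Qed.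

Definition horn_incl (Hn : 0 < n) (Hk : k <= n) :
  smap (LamK Hn Hk) (DeltaK Hn Hk) := dincl hornS_all TK_TK.
Definition thin_incl (Hn : 1 < n) (Hk : k <= n) :
  smap (DeltaK' Hn Hk) (DeltaK'' Hn Hk) := dincl all_all TK'_TK''.

End Elementary.

Inductive anodyne (inner : bool) : forall X Y : Strat, smap X Y -> Prop :=
| an_po_horn : forall n k (Hn : 0 < n) (Hk : k <= n),
    (inner -> 0 < k < n) ->
    forall (C D : Strat) (g : smap (LamK Hn Hk) C) (h : smap (DeltaK Hn Hk) D)
           (j : smap C D),
    is_pushout (horn_incl Hn Hk) g h j -> anodyne inner j
| an_po_thin : forall n k (Hn : 1 < n) (Hk : k <= n),
    (inner -> 0 < k < n) ->
    forall (C D : Strat) (g : smap (DeltaK' Hn Hk) C) (h : smap (DeltaK'' Hn Hk) D)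
           (j : smap C D),
    is_pushout (thin_incl Hn Hk) g h j -> anodyne inner j
| an_tcomp : forall (W : wellorder) (X : chain W),
    continuous_chain X ->
    (forall (i j : W) (h : wle i j), wsucc i j -> anodyne inner (cmap X h)) ->
    forall (Y : Strat) (c : forall i : W, True -> smap (X i) Y),
    is_colim X (fun _ => True) Y c ->
    anodyne inner (c (wbot W) I).

(* an entire superset of Delta[n]: a stratification of Delta[n] *)
Record entire (n : nat) := MkEntire {
  ethin : forall m, sop m n -> Prop;
  ethin_degen : forall m (a : sop m n), @degen (Delta_sSet n) _ a -> ethin a;
  ethin0 : forall a : sop 0 n, ~ ethin a
}.
Arguments ethin {n} e {m} _.

Definition Nstrat n (N : entire n) : Strat :=
  dstrat (@allS_closed n) (@ethin_degen n N) (@ethin0 n N).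

Definition LamN n (K : pred nat) (N : entire n) : Strat :=
  dstrat (@hornS_closed n K) (@ethin_degen n N) (@ethin0 n N).

Lemma hornS_all' n (K : pred nat) m (a : sop m n) : hornS K a -> true.
Proof. by []. Qed.
Lemma ethin_id n (N : entire n) m (a : sop m n) : ethin N a -> ethin N a.
Proof. by []. Qed.

Definition LamN_incl n (K : pred nat) (N : entire n) :
  smap (LamN K N) (Nstrat N) := dincl (@hornS_all' n K) (@ethin_id n N).

Definition admissible n k m (a : sop m n) : Prop :=
  ~ @degen (Delta_sSet n) _ a /\ adm k a.

Definition complicial n (vk : seq nat) (N : entire n) : Prop :=
  forall k, k \in vk ->
    (forall m (a : sop m n), admissible k a -> ethin N a) /\
    (forall r (a : sop r.+1 n), admissible k a ->
       forall l : 'I_r.+2, val (ap a l) = k ->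
         ethin N (sop_comp a (face l)) ->
         forall j : 'I_r.+2, (j.+1 == l) || (j == l.+1 :> nat) ->
           ethin N (sop_comp a (face j))).

From mathcomp Require Import all_boot zify.
From Stdlib Require Import FunctionalExtensionality PropExtensionality ProofIrrelevance Classical.
Set Implicit Arguments.
Unset Strict Implicit.
Unset Printing Implicit Defensive.

(* Write K = {k_1} ∪ ks. Enumerate the subsets A of ks with supersets first and
   let α_A : [m] → [n] be the face of Δ[n] spanned by [n] \ A. Starting from
   Λ^K N, add for each A in turn every simplex whose image avoids A. Since the
   supersets of A were treated before, the simplices of the previous stage that
   factor through α_A are exactly those of Λ^{k_1}[m], and because all entries
   of ks exceed k_1 + 1, α_A is the identity near k_1, so condition (a) makes the
   k_1-admissible ones thin: the step is a pushout of Λ^{k_1}[m] ⊆ Δ^{k_1}[m]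
   along α_A, in which the k_1-face of α_A stays thin only if it was so before.
   If that face is thin in N, it is made thin by a pushout of
   Δ^{k_1}[m]' ⊆ Δ^{k_1}[m]'', the other codimension-one faces of α_A being thin
   by (a) and (b). After the empty set every simplex of N has been added. When
   0 < k_1 and k_t < n, also k_1 < m, so all these extensions are inner. *)

Record substrat (n : nat) := Substrat {
  smem : forall m, sop m n -> bool;
  smem_act : forall m p (f : sop m p) (a : sop p n), smem a -> smem (sop_comp a f);
  sthin : forall m, sop m n -> Prop;
  sthin_degen : forall m (a : sop m n), @degen (Delta_sSet n) _ a -> sthin a;
  sthin0 : forall a : sop 0 n, ~ sthin a }.
Arguments smem {n} s {m}.
Arguments sthin {n} s {m}.

Definition strat_of n (r : substrat n) : Strat :=
  dstrat (@smem_act n r) (@sthin_degen n r) (@sthin0 n r).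

Section SubIncl.
Variables (n : nat) (r1 r2 : substrat n).
Hypothesis hmem : forall m (a : sop m n), smem r1 a -> smem r2 a.
Hypothesis hthin : forall m (a : sop m n), smem r1 a -> sthin r1 a -> sthin r2 a.

Definition sub_incl_fun m (x : strat_of r1 m) : strat_of r2 m :=
  exist _ (val x) (hmem (valP x)).

Lemma sub_incl_nat m p (f : sop m p) (x : strat_of r1 p) :
  sub_incl_fun (act f x) = act f (sub_incl_fun x).
Proof. exact: val_inj. Qed.

Lemma sub_incl_thin m (x : strat_of r1 m) : thin x -> thin (sub_incl_fun x).
Proof. exact: hthin (valP x). Qed.

Definition sub_incl : smap (strat_of r1) (strat_of r2) :=
  MkSmap sub_incl_nat sub_incl_thin.
End SubIncl.
Arguments sub_incl {n} r1 r2 hmem hthin.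

Lemma smap_ext (X Y : Strat) (f g : smap X Y) : (forall m x, f m x = g m x) -> f = g.
Proof.
case: f => f fn ft; case: g => g gn gt /= e.
have efg : f = g.
  by apply: functional_extensionality_dep => m; apply: functional_extensionality.
subst g; by rewrite (proof_irrelevance _ fn gn) (proof_irrelevance _ ft gt).
Qed.

Lemma substrat_ext n (r r' : substrat n) :
  (forall m (a : sop m n), smem r a = smem r' a) ->
  (forall m (a : sop m n), sthin r a <-> sthin r' a) -> r = r'.
Proof.
case: r => S HS T Hd H0; case: r' => S' HS' T' Hd' H0' /= eS eT.
have eS' : S = S'.
  by apply: functional_extensionality_dep => m; apply: functional_extensionality.
have eT' : T = T'.
  apply: functional_extensionality_dep => m; apply: functional_extensionality => a.
  exact/propositional_extensionality/eT.
subst S' T'.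
by rewrite (proof_irrelevance _ HS HS') (proof_irrelevance _ Hd Hd') (proof_irrelevance _ H0 H0').
Qed.

Lemma anodyne_sub_incl_congr b n (r1 r2 r1' r2' : substrat n) hmem hthin hmem' hthin' :
  r1 = r1' -> r2 = r2' ->
  anodyne b (sub_incl r1 r2 hmem hthin) -> anodyne b (sub_incl r1' r2' hmem' hthin').
Proof.
move=> e1 e2; subst r1' r2'.
by rewrite (proof_irrelevance _ hmem' hmem) (proof_irrelevance _ hthin' hthin).
Qed.

Definition horn_substrat n (K : pred nat) (N : entire n) : substrat n :=
  Substrat (@hornS_closed n K) (@ethin_degen n N) (@ethin0 n N).
Definition full_substrat n (N : entire n) : substrat n :=
  Substrat (@allS_closed n) (@ethin_degen n N) (@ethin0 n N).

Lemma LamN_inclE n (K : pred nat) (N : entire n) hmem hthin :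
  LamN_incl K N = sub_incl (horn_substrat K N) (full_substrat N) hmem hthin.
Proof. by apply: smap_ext => m x; apply: val_inj. Qed.

Section OrdWellorder.
Variable M : nat.

Definition ord_le (i j : 'I_M.+1) : Prop := i <= j.

Lemma ord_le_refl i : ord_le i i. Proof. exact: leqnn. Qed.

Lemma ord_le_anti i j : ord_le i j -> ord_le j i -> i = j.
Proof. by move=> h1 h2; apply/val_inj/eqP; rewrite eqn_leq h1 h2. Qed.

Lemma ord_le_trans i j k : ord_le i j -> ord_le j k -> ord_le i k.
Proof. exact: leq_trans. Qed.

Lemma ord_le_total i j : ord_le i j \/ ord_le j i.
Proof. by rewrite /ord_le; case: (leqP i j) => h; [left|right; apply: ltnW]. Qed.

Lemma ord_lt_wf : well_founded (fun i j : 'I_M.+1 => ord_le i j /\ i <> j).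
Proof.
apply: (@Wf_nat.well_founded_lt_compat _ (fun i : 'I_M.+1 => val i)) => x y [h1 h2].
apply/ltP; rewrite ltn_neqAle h1 andbT; apply/eqP => e; exact/h2/val_inj.
Qed.

Lemma ord_le0 i : ord_le ord0 i. Proof. by []. Qed.

Definition ord_wellorder : wellorder :=
  MkWO ord_le_refl ord_le_anti ord_le_trans ord_le_total ord_lt_wf ord_le0.

Lemma ord_wellorder_no_limit (j : ord_wellorder) : ~ wlimit j.
Proof.
case: j => j jlt [hj0 hj].
have j0 : 0 < j by rewrite lt0n; apply/eqP => e; apply/hj0/val_inj.
have jp : j.-1 < M.+1 by lia.
have [|[l lp] [[h1 h2] [h3 h4]]] := hj (Ordinal jp).
  by split; [rewrite /= /ord_le /=; lia | move/(f_equal val) => /=; lia].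
have h2' : l <> j.-1 by move=> e; apply/h2/val_inj.
have h4' : l <> j by move=> e; apply/h4/val_inj.
move: h1 h3; rewrite /= /ord_le /=; lia.
Qed.

Lemma wsucc_ordS (i j : ord_wellorder) : wsucc i j -> val j = (val i).+1.
Proof.
case: i j => i ip [j jp] [[h1 h2] h] /=.
have h2' : i <> j by move=> e; apply/h2/val_inj.
move: h1; rewrite /= /ord_le /= => h1.
case: (ltnP i.+1 j) => h3; last by lia.
have ip' : i.+1 < M.+1 by lia.
case: (h (Ordinal ip')); split; split; rewrite /= /ord_le /=; try lia;
  by move/(f_equal val) => /=; lia.
Qed.
End OrdWellorder.

Section FiniteChain.
Variables (n M : nat) (X : nat -> substrat n).
Hypothesis memS : forall i m (a : sop m n), smem (X i) a -> smem (X i.+1) a.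
Hypothesis thinS : forall i m (a : sop m n), smem (X i) a -> sthin (X i) a -> sthin (X i.+1) a.

Lemma chain_mem_mono i j : i <= j -> forall m (a : sop m n), smem (X i) a -> smem (X j) a.
Proof.
move=> /subnK <-; elim: (j - i) => [|d IH] m a h //=.
by rewrite addSn; apply/memS/IH.
Qed.

Lemma chain_thin_mono i j : i <= j ->
  forall m (a : sop m n), smem (X i) a -> sthin (X i) a -> sthin (X j) a.
Proof.
move=> /subnK <-; elim: (j - i) => [|d IH] m a hs h //=.
rewrite addSn; apply: thinS; last exact: IH.
exact: chain_mem_mono (leq_addl _ _) _ _ hs.
Qed.

Definition chain_map (i j : 'I_M.+1) (h : ord_le i j) :
  smap (strat_of (X i)) (strat_of (X j)) :=
  sub_incl (X i) (X j) (chain_mem_mono h) (chain_thin_mono h).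

Lemma chain_map_id (i : 'I_M.+1) (h : ord_le i i) m (x : strat_of (X i) m) :
  chain_map h m x = x.
Proof. exact: val_inj. Qed.

Lemma chain_map_comp (i j k : 'I_M.+1) (hij : ord_le i j) (hjk : ord_le j k) (hik : ord_le i k) :
  smap_eq (chain_map hik) (smap_comp (chain_map hjk) (chain_map hij)).
Proof. by move=> m x; apply: val_inj. Qed.

Definition ord_chain : chain (ord_wellorder M) :=
  @MkChain (ord_wellorder M) (fun i => strat_of (X i)) chain_map chain_map_id chain_map_comp.

Lemma ord_chain_continuous : continuous_chain ord_chain.
Proof. by move=> j /ord_wellorder_no_limit. Qed.

Definition chain_cocone (i : 'I_M.+1) (_ : True) : smap (strat_of (X i)) (strat_of (X M)) :=
  sub_incl (X i) (X M) (chain_mem_mono (leq_ord i)) (chain_thin_mono (leq_ord i)).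

Lemma ord_chain_colim : is_colim ord_chain (fun _ => True) (strat_of (X M)) chain_cocone.
Proof.
split=> [i j Pi Pj h m x|E e He]; first exact: val_inj.
exists (e ord_max I); split=> [i Pi m x|u' Hu m x].
  by rewrite -(He i ord_max Pi I (leq_ord i) m x) /=; congr (_ _ _); apply: val_inj.
by rewrite -(Hu ord_max I m x) /=; congr (_ _ _); apply: val_inj.
Qed.

Lemma anodyne_chain b :
  (forall i, i < M -> anodyne b (sub_incl (X i) (X i.+1) (@memS i) (@thinS i))) ->
  forall hmem hthin, anodyne b (sub_incl (X 0) (X M) hmem hthin).
Proof.
move=> Hstep hmem hthin.
have Hsucc (i j : ord_wellorder M) (h : wle i j) : wsucc i j -> anodyne b (cmap ord_chain h).
  move=> /wsucc_ordS e.
  have iM : val i < M by have := ltn_ord j; rewrite e.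
  by apply: anodyne_sub_incl_congr (Hstep _ iM) => //; rewrite e.
have := an_tcomp ord_chain_continuous Hsucc ord_chain_colim.
exact: anodyne_sub_incl_congr.
Qed.
End FiniteChain.

(* The identity is the composite of a one-element chain. *)
Lemma anodyne_sub_refl b n (r : substrat n) hmem hthin : anodyne b (sub_incl r r hmem hthin).
Proof.
exact: (@anodyne_chain n 0 (fun=> r) (fun _ _ _ h => h) (fun _ _ _ _ h => h) b
          (fun i hi => False_ind _ (notF hi))).
Qed.

Lemma apE m n p (g : sop n p) (f : sop m n) i : ap (sop_comp g f) i = ap g (ap f i).
Proof. by rewrite /ap /= ffunE. Qed.

Lemma sop_ext m n (f g : sop m n) : (forall i, val (ap f i) = val (ap g i)) -> f = g.
Proof. by move=> h; apply: val_inj; apply/ffunP => i; apply: val_inj; exact: h. Qed.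

Definition smono m n (a : sop m n) := forall i j : 'I_m.+1, i < j -> ap a i < ap a j.

Lemma smono_le m n (a : sop m n) : smono a -> forall i j, (ap a i <= ap a j) = (i <= j).
Proof.
move=> h i j; apply/idP/idP => hij.
  by rewrite leqNgt; apply/negP => /h; rewrite ltnNge hij.
exact: ap_mono.
Qed.

Lemma smono_lt m n (a : sop m n) : smono a -> forall i j, (ap a i < ap a j) = (i < j).
Proof. by move=> h i j; rewrite !ltnNge smono_le. Qed.

Lemma smono_inj m n (a : sop m n) : smono a -> forall i j, ap a i = ap a j -> i = j.
Proof.
move=> h i j e; apply: val_inj; apply/eqP; rewrite eqn_leq -!(smono_le h) e; by rewrite leqnn.
Qed.

Lemma smono_comp m r q (a : sop m r) (g : sop q m) : smono a -> smono g -> smono (sop_comp a g).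
Proof. by move=> ha hg x y hxy; rewrite !apE; apply: ha; apply: hg. Qed.

Lemma card_ord_lt m c : c <= m.+1 -> #|[pred j : 'I_m.+1 | j < c]| = c.
Proof.
elim: c => [|c IH] hc.
  by apply: eq_card0 => j; rewrite inE.
have hc' : c < m.+1 by [].
have -> : #|[pred j : 'I_m.+1 | j < c.+1]| =
          #|[predU1 (Ordinal hc') & [pred j : 'I_m.+1 | j < c]]|.
  apply: eq_card => j; rewrite !inE ltnS leq_eqVlt; congr (_ || _).
by rewrite cardU1 IH ?(ltnW hc) // inE /= ltnn.
Qed.

Lemma card_smono m n (a : sop m n) : smono a -> forall j,
  #|[pred j' : 'I_m.+1 | ap a j' < ap a j]| = j.
Proof.
move=> h j; rewrite -(@card_ord_lt m j); last exact: ltnW (ltn_ord j).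
by apply: eq_card => j'; rewrite !inE (smono_lt h).
Qed.

Section Factor.
Variables (m n : nat) (a : sop m n).

(* Counting the vertices of a below b i recovers the a-preimage of b i, if any. *)
Definition factorf p (b : sop p n) : {ffun 'I_p.+1 -> 'I_m.+1} :=
  [ffun i => inord (minn #|[pred j : 'I_m.+1 | ap a j < ap b i]| m)].

Lemma monob_factor p (b : sop p n) : monob (factorf b).
Proof.
apply/forallP => i; apply/forallP => j; apply/implyP => hij; rewrite !ffunE.
rewrite /= !inordK; try by apply: leq_ltn_trans (geq_minr _ _) _.
rewrite leq_min geq_minr andbT; apply: leq_trans (geq_minl _ _) _.
apply: subset_leq_card; apply/subsetP => j'; rewrite !inE => h.
by apply: leq_trans h (ap_mono b hij).
Qed.

Definition factor p (b : sop p n) : sop p m := exist (@monob p m) _ (monob_factor b).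

Hypothesis a_smono : smono a.

Lemma factorE p (b : sop p n) i j : ap b i = ap a j -> ap (factor b) i = j.
Proof.
move=> e; apply: val_inj; rewrite /ap /= ffunE e card_smono //.
by rewrite (minn_idPl (leq_ord j)) inordK // ltnS leq_ord.
Qed.

Lemma factor_comp p (g : sop p m) : factor (sop_comp a g) = g.
Proof. by apply: sop_ext => i; rewrite (@factorE _ _ i (ap g i)) // apE. Qed.

Lemma factorK p (b : sop p n) : (forall i, exists j, ap a j = ap b i) ->
  sop_comp a (factor b) = b.
Proof.
move=> h; apply: sop_ext => i; have [j e] := h i.
by rewrite apE (@factorE _ _ i j) ?e.
Qed.
End Factor.

Definition noninj q n (b : sop q n) := exists i j : 'I_q.+1, i < j /\ ap b i = ap b j.

Lemma degen_noninj q n (b : sop q n) : @degen (Delta_sSet n) _ b -> noninj b.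
Proof.
case=> p [s [y [hp e]]].
have : ~~ injectiveb (fun i => ap s i).
  apply/negP => /injectiveP /leq_card; rewrite !card_ord; lia.
case/injectivePn => i [j hij esij].
have eb : forall i, ap b i = ap y (ap s i) by move=> i'; rewrite e /= apE.
case: (ltngtP i j) => h.
- by exists i, j; split => //; rewrite !eb esij.
- by exists j, i; split => //; rewrite !eb esij.
- by move/eqP: hij; case; apply: val_inj.
Qed.

Lemma noninj_adjacent q n (b : sop q n) : noninj b ->
  exists q', q = q'.+1 /\ exists i, i < q /\ val (ap b (inord i)) = val (ap b (inord i.+1)).
Proof.
case=> i [j [hij e]].
case: q b i j hij e => [|q'] b i j hij e.
  by move: (ltn_ord j); move: hij; lia.
exists q'; split => //; exists i; split.
  by have := ltn_ord j; lia.
have hj := ltn_ord j.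
apply/eqP; rewrite eqn_leq; apply/andP; split.
  apply: ap_mono; rewrite !inordK //; lia.
have h1 : ap b (inord i) = ap b i by congr (ap b _); apply: val_inj; rewrite /= inordK.
rewrite h1 e; apply: ap_mono; rewrite inordK //; lia.
Qed.

Definition degenf q (i : nat) : {ffun 'I_q.+2 -> 'I_q.+1} :=
  [ffun j : 'I_q.+2 => inord (if (j <= i)%N then minn j q else (j : nat).-1)].

Lemma monob_degen q i : monob (degenf q i).
Proof.
apply/forallP => x; apply/forallP => y; apply/implyP => hxy; rewrite !ffunE.
have hx := ltn_ord x; have hy := ltn_ord y.
rewrite /= !inordK; (repeat case: ifP => ?); try lia.
Qed.

Definition degen_op q i : sop q.+1 q := exist (@monob q.+1 q) _ (monob_degen q i).

Lemma degen_opE q i (j : 'I_q.+2) :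
  nat_of_ord (ap (degen_op q i) j) = if (j <= i)%N then minn j q else (j : nat).-1.
Proof. rewrite /ap /= ffunE inordK //; case: ifP => _; have := ltn_ord j; lia. Qed.

Lemma faceE r (l : 'I_r.+2) (j : 'I_r.+1) : nat_of_ord (ap (face l) j) = bump l j.
Proof. by rewrite /ap /= ffunE. Qed.

Lemma face_apE r (l : 'I_r.+2) j : ap (face l) j = lift l j.
Proof. by rewrite /ap /= ffunE. Qed.

(* If b repeats a value at i and i + 1, then b = (b o δ_{i+1}) o σ_i. *)
Lemma noninj_degen q n (b : sop q n) : noninj b -> @degen (Delta_sSet n) _ b.
Proof.
move=> /noninj_adjacent [q' [eq [i [hi ei]]]]; subst q.
pose l : 'I_q'.+2 := inord i.+1.
exists q', (degen_op q' i), (sop_comp b (face l)); split => //.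
apply: sop_ext => j /=; rewrite !apE.
have hj := ltn_ord j.
have e1 : ap (face l) (ap (degen_op q' i) j) = inord (bump l (ap (degen_op q' i) j)).
  apply: val_inj; rewrite /= faceE inordK //.
  by have := ltn_ord (ap (degen_op q' i) j); rewrite /bump; case: (l <= _)%N => /=; lia.
rewrite e1 degen_opE /bump /l inordK; last lia.
case: (ltngtP j i.+1) => hji.
- rewrite (_ : (j <= i)%N = true); last lia.
  rewrite (_ : minn j q' = j); last lia.
  rewrite (_ : (i < j)%N = false); last lia.
  by congr (val (ap b _)); apply: val_inj; rewrite /= inordK //; lia.
- rewrite (_ : (j <= i)%N = false); last lia.
  rewrite (_ : (i < j.-1)%N = true); last lia.
  by congr (val (ap b _)); apply: val_inj; rewrite /= inordK //; lia.
- rewrite (_ : (j <= i)%N = false); last lia.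
  rewrite (_ : (i < j.-1)%N = false); last lia.
  have -> : j = inord i.+1 by apply: val_inj; rewrite /= inordK //; lia.
  rewrite -ei; congr (val (ap b _)); apply: val_inj; rewrite /= !inordK //; lia.
Qed.

Lemma smono_nondeg q n (b : sop q n) : smono b -> ~ @degen (Delta_sSet n) _ b.
Proof.
move=> h /degen_noninj [i [j [hij e]]].
by move: (h _ _ hij); rewrite e ltnn.
Qed.

Lemma noninj_comp m n p (a : sop m n) (g : sop p m) : noninj g -> noninj (sop_comp a g).
Proof. by case=> i [j [hij e]]; exists i, j; split => //; rewrite !apE e. Qed.

Lemma noninj_compK m n p (a : sop m n) (g : sop p m) : smono a ->
  noninj (sop_comp a g) -> noninj g.
Proof.
move=> ha [i [j [hij e]]]; exists i, j; split => //.
by move: e; rewrite !apE => /(smono_inj ha).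
Qed.

Lemma degen_comp m n p (a : sop m n) (g : sop p m) :
  @degen (Delta_sSet m) _ g -> @degen (Delta_sSet n) _ (sop_comp a g).
Proof. by move=> /degen_noninj /(noninj_comp a) /noninj_degen. Qed.

Lemma degen_compK m n p (a : sop m n) (g : sop p m) : smono a ->
  @degen (Delta_sSet n) _ (sop_comp a g) -> @degen (Delta_sSet m) _ g.
Proof. by move=> ha /degen_noninj /(noninj_compK ha) /noninj_degen. Qed.

Lemma smono_face r (l : 'I_r.+2) : smono (face l).
Proof.
move=> i j hij; rewrite /ap /= !ffunE /=.
by rewrite /bump; case hi: (l <= i)%N; case hj: (l <= j)%N => /=; lia.
Qed.

(* A monotone surjection [q] -> [r] rises by at most one at each step, so it stays
   below the identity; reaching r then forces q = r and equality everywhere. *)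
Section SurjMono.
Variables (q r : nat) (f : sop q r).
Hypothesis f_surj : forall j : 'I_r.+1, exists i, ap f i = j.
Hypothesis q_le_r : q <= r.
Let F (i : nat) : nat := ap f (inord i).

Let F_mono i j : i <= j <= q -> F i <= F j.
Proof. move=> /andP [h1 h2]; apply: ap_mono; rewrite !inordK //; lia. Qed.

Let F_ord (i : 'I_q.+1) : F i = ap f i.
Proof. by rewrite /F; congr (nat_of_ord (ap f _)); apply: val_inj; rewrite /= inordK. Qed.

Let F_le i : F i <= r.
Proof. by have := ltn_ord (ap f (inord i)). Qed.

Let F_hit (j : nat) : j <= r -> exists i, i <= q /\ F i = j.
Proof.
move=> hj; have [i e] := f_surj (inord j).
exists i; split; first by have := ltn_ord i.
by rewrite F_ord e inordK.
Qed.

Let F_step i : i < q -> F i.+1 <= (F i).+1.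
Proof.
move=> hi; rewrite leqNgt; apply/negP => h.
have [|i' [hi' e]] := F_hit (j := (F i).+1); first by have := F_le i.+1; lia.
case: (leqP i' i) => h'.
- have := F_mono (i := i') (j := i); lia.
- have := F_mono (i := i.+1) (j := i'); lia.
Qed.

Let F_leid i : i <= q -> F i <= i.
Proof.
elim: i => [|i IH] hi.
  have [i0 [hi0 e]] := F_hit (j := 0) (leq0n _).
  have := F_mono (i := 0) (j := i0); lia.
have := F_step (i := i); have := IH (ltnW hi); lia.
Qed.

Lemma surj_mono_eq : q = r.
Proof.
have [i0 [hi0 e]] := F_hit (leqnn r).
have := F_leid hi0; lia.
Qed.

Lemma surj_mono_id (i : 'I_q.+1) : (ap f i : nat) = i.
Proof.
rewrite -F_ord.
have Fq : F q = q.
  have [i0 [hi0 e]] := F_hit (leqnn r).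
  have := F_mono (i := i0) (j := q); have := F_leid (leqnn q); have := surj_mono_eq; lia.
have ge : forall d, d <= q -> q - d <= F (q - d).
  elim => [|d IH] hd; first by rewrite subn0 Fq.
  have := IH (ltnW hd); have := F_step (i := q - d.+1).
  rewrite (_ : (q - d.+1).+1 = q - d); last lia.
  lia.
have hi := ltn_ord i.
have := ge (q - i) (leq_subr _ _); rewrite (_ : q - (q - i) = i); last lia.
have := F_leid (i := i); lia.
Qed.
End SurjMono.

Definition inim q r (b : sop q r) (x : nat) : bool := [exists i, (ap b i : nat) == x].

Lemma inimP q r (b : sop q r) x : reflect (exists i, (ap b i : nat) = x) (inim b x).
Proof.
apply: (iffP existsP) => [[i /eqP e]|[i e]]; exists i => //; exact/eqP.
Qed.

Lemma hornS_iff q r (P : pred nat) (g : sop q r) :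
  hornS P g = [exists j : 'I_r.+1, ~~ inim g j && ~~ P j].
Proof.
rewrite /hornS negb_forall; apply: eq_existsb => j; rewrite negb_or; congr (~~ _ && _).
Qed.

Lemma hornSP q r (P : pred nat) (g : sop q r) :
  reflect (exists j : 'I_r.+1, ~~ inim g j /\ ~~ P j) (hornS P g).
Proof.
rewrite hornS_iff; apply: (iffP existsP) => [[j /andP [h1 h2]]|[j [h1 h2]]]; exists j => //.
by rewrite h1 h2.
Qed.

Lemma inim_comp m n q (a : sop m n) (g : sop q m) x :
  inim (sop_comp a g) x = [exists j : 'I_m.+1, ((ap a j : nat) == x) && inim g j].
Proof.
apply/inimP/existsP => [[i e]|[j /andP [/eqP e /inimP [i ei]]]].
  exists (ap g i); rewrite -e apE eqxx /=; apply/inimP; by exists i.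
exists i; rewrite apE -e; congr (nat_of_ord (ap a _)); exact: val_inj.
Qed.

Lemma inim_comp_sub m n q (a : sop m n) (g : sop q m) x :
  inim (sop_comp a g) x -> inim a x.
Proof. by move=> /inimP [i e]; apply/inimP; exists (ap g i); rewrite -e apE. Qed.

Definition avoids (A : seq nat) q r (b : sop q r) : bool := all (fun x => ~~ inim b x) A.

Lemma avoids_act A n q p (f : sop q p) (b : sop p n) :
  avoids A b -> avoids A (sop_comp b f).
Proof.
move=> /allP h; apply/allP => x hx; apply/negP => /inim_comp_sub; by apply/negP; apply: h.
Qed.

Lemma is_face_smono m q (g : sop q m) (i : 'I_m.+1) : is_face g i -> smono g.
Proof.
case=> _ h x y hxy; rewrite !h /bump.
by case hx: (i <= x)%N; case hy: (i <= y)%N => /=; lia.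
Qed.

Lemma is_face_hit m q (g : sop q m) (i : 'I_m.+1) : is_face g i ->
  forall x : 'I_m.+1, x != i -> exists j, ap g j = x.
Proof.
case=> e h x hx.
have hj : unbump i x < q.+1.
  rewrite e /unbump; have := ltn_ord x; have := ltn_ord i.
  have hne : (x : nat) != i by [].
  case: (ltnP i x) => /=; move: hne; lia.
exists (Ordinal hj); apply: val_inj; rewrite /= h /=.
rewrite unbumpKcond; case: eqP => [e'|] //=.
by move: hx; rewrite (_ : x = i) ?eqxx //; apply: val_inj.
Qed.

Lemma face_of_image r q (g : sop q r.+1) (l : 'I_r.+2) :
  (forall j : 'I_r.+2, (exists i, ap g i = j) <-> j <> l) ->
  ~ @degen (Delta_sSet r.+1) _ g -> is_face g l.
Proof.
move=> g_image g_nondeg.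
have g_factor i : exists j, ap (face l) j = ap g i.
  have hne : ap g i <> l by apply/g_image; exists i.
  by case: (unliftP l (ap g i)) => [j ->|//]; exists j; rewrite face_apE.
have eK := factorK (smono_face l) g_factor.
case: (ltnP r q) => hrq.
  by case: g_nondeg; exists r, (factor (face l) g), (face l).
have f_surj (j : 'I_r.+1) : exists i, ap (factor (face l) g) i = j.
  have [i ei] : exists i, ap g i = lift l j.
    by apply/g_image => e; move: (neq_lift l j); rewrite e eqxx.
  by exists i; apply: (factorE (smono_face l)); rewrite ei face_apE.
have qr := surj_mono_eq f_surj hrq; split=> [|i]; first by rewrite qr.
by rewrite -eK apE face_apE /= surj_mono_id.
Qed.

Lemma is_face_of_image m q (g : sop q m) (l : 'I_m.+1) : 0 < m ->
  (forall j : 'I_m.+1, (exists i, ap g i = j) <-> j <> l) ->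
  ~ @degen (Delta_sSet m) _ g -> is_face g l.
Proof. by case: m g l => [|r] g l // _; apply: face_of_image. Qed.

Section HornPushout.
Variables (n m k : nat) (Hm : 0 < m) (Hk : k <= m) (a : sop m n) (r1 r2 : substrat n).
Hypothesis a_smono : smono a.
Hypothesis hmem : forall q (b : sop q n), smem r1 b -> smem r2 b.
Hypothesis hthin : forall q (b : sop q n), smem r1 b -> sthin r1 b -> sthin r2 b.
Hypothesis mem_horn_comp :
  forall q (g : sop q m), smem r1 (sop_comp a g) = hornS (pred1 k) g.
Hypothesis new_factors : forall q (b : sop q n), smem r2 b -> ~~ smem r1 b ->
  forall i, exists j, ap a j = ap b i.
Hypothesis thin_horn_comp : forall q (g : sop q m),
  hornS (pred1 k) g -> TK k g -> sthin r1 (sop_comp a g).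
Hypothesis mem_comp : forall q (g : sop q m), smem r2 (sop_comp a g).
Hypothesis thin_comp : forall q (g : sop q m), TK k g -> sthin r2 (sop_comp a g).
Hypothesis new_thin_factor : forall q (b : sop q n),
  smem r2 b -> sthin r2 b -> ~~ smem r1 b -> TK k (factor a b).
Hypothesis thin_old : forall q (b : sop q n), smem r1 b -> sthin r2 b -> sthin r1 b.

Definition horn_fun q (y : LamK Hm Hk q) : strat_of r1 q.
Proof. by exists (sop_comp a (val y)); rewrite mem_horn_comp (valP y). Defined.

Lemma horn_fun_nat q p (f : sop q p) (y : LamK Hm Hk p) :
  horn_fun (act f y) = act f (horn_fun y).
Proof. by apply: val_inj; rewrite /= sop_compA. Qed.

Lemma horn_fun_thin q (y : LamK Hm Hk q) : thin y -> thin (horn_fun y).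
Proof. exact: thin_horn_comp (valP y). Qed.

Definition horn_map : smap (LamK Hm Hk) (strat_of r1) := MkSmap horn_fun_nat horn_fun_thin.

Definition simplex_fun q (y : DeltaK Hm Hk q) : strat_of r2 q :=
  exist _ (sop_comp a (val y)) (mem_comp (val y)).

Lemma simplex_fun_nat q p (f : sop q p) (y : DeltaK Hm Hk p) :
  simplex_fun (act f y) = act f (simplex_fun y).
Proof. by apply: val_inj; rewrite /= sop_compA. Qed.

Lemma simplex_fun_thin q (y : DeltaK Hm Hk q) : thin y -> thin (simplex_fun y).
Proof. exact: thin_comp. Qed.

Definition simplex_map : smap (DeltaK Hm Hk) (strat_of r2) :=
  MkSmap simplex_fun_nat simplex_fun_thin.

Section Glue.
Variables (E : Strat) (u : smap (DeltaK Hm Hk) E) (v : smap (strat_of r1) E).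
Hypothesis Huv : smap_eq (smap_comp u (horn_incl Hm Hk)) (smap_comp v horn_map).

Lemma glue_agree q (g : sop q m) (hg : hornS (pred1 k) g) pf :
  v q (exist _ (sop_comp a g) pf) = u q (exist _ g isT).
Proof.
have /= e := @Huv q (exist _ g hg).
rewrite (_ : exist _ _ pf = horn_fun (exist _ g hg)); last exact: val_inj.
by rewrite -e; congr (u q _); apply: val_inj.
Qed.

(* Old simplices are sent along v; a new one factors uniquely through a and is
   sent along u. *)
Definition glue_fun q (x : strat_of r2 q) : E q :=
  match insub (val x) : option (strat_of r1 q) with
  | Some y => v q y
  | None => u q (exist _ (factor a (val x)) isT)
  end.

Lemma glue_fun_old q (x : strat_of r2 q) (h : smem r1 (val x)) :
  glue_fun x = v q (exist _ (val x) h).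
Proof. by rewrite /glue_fun insubT. Qed.

Lemma glue_fun_new q (x : strat_of r2 q) (h : ~~ smem r1 (val x)) :
  glue_fun x = u q (exist _ (factor a (val x)) isT).
Proof. by rewrite /glue_fun insubF //; apply: negbTE. Qed.

Lemma glue_fun_nat q p (f : sop q p) (x : strat_of r2 p) :
  glue_fun (act f x) = act f (glue_fun x).
Proof.
have vx : val (act f x) = sop_comp (val x) f by [].
case h1: (smem r1 (val x)).
  have h2 : smem r1 (val (act f x)) by rewrite vx; apply: smem_act.
  by rewrite (glue_fun_old h1) (glue_fun_old h2) -sm_nat; congr (v q _); apply: val_inj.
have eK := factorK a_smono (new_factors (valP x) (negbT h1)).
set g := sop_comp (factor a (val x)) f.
have eg : val (act f x) = sop_comp a g by rewrite vx -{1}eK -sop_compA.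
rewrite (glue_fun_new (negbT h1)) -sm_nat.
case h2: (smem r1 (val (act f x))).
  have hg : hornS (pred1 k) g by rewrite -mem_horn_comp -eg.
  have pf : smem r1 (sop_comp a g) by rewrite -eg.
  rewrite (glue_fun_old h2) (_ : act f _ = exist _ g isT :> DeltaK Hm Hk q); last exact: val_inj.
  by rewrite -(glue_agree hg pf); congr (v q _); apply: val_inj.
rewrite (glue_fun_new (negbT h2)); congr (u q _); apply: val_inj.
by change (factor a (val (act f x)) = g); rewrite eg factor_comp.
Qed.

Lemma glue_fun_thin q (x : strat_of r2 q) : thin x -> thin (glue_fun x).
Proof.
move=> hx; case h1: (smem r1 (val x)).
  by rewrite (glue_fun_old h1); apply/sm_thin/thin_old.
rewrite (glue_fun_new (negbT h1)); apply: sm_thin.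
exact: new_thin_factor (valP x) hx (negbT h1).
Qed.

Definition glue_map : smap (strat_of r2) E := MkSmap glue_fun_nat glue_fun_thin.
End Glue.

Lemma horn_pushout :
  is_pushout (horn_incl Hm Hk) horn_map simplex_map (sub_incl r1 r2 hmem hthin).
Proof.
split=> [q y|E u v Huv]; first exact: val_inj.
exists (glue_map Huv); split=> [q y /=|q y /=|w' Hw1 Hw2 q x /=].
- case h: (smem r1 (sop_comp a (val y))).
    rewrite (glue_fun_old u v (x := simplex_fun y) h).
    have hg : hornS (pred1 k) (val y) by rewrite -mem_horn_comp.
    by rewrite (glue_agree Huv hg); congr (u q _); apply: val_inj.
  rewrite (glue_fun_new u v (x := simplex_fun y) (negbT h)); congr (u q _).
  by apply: val_inj; rewrite /= factor_comp.
- rewrite (glue_fun_old u v (x := sub_incl_fun hmem y) (valP y)).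
  by congr (v q _); apply: val_inj.
- case h1: (smem r1 (val x)).
    rewrite (glue_fun_old u v h1) -(Hw2 q (exist _ (val x) h1)) /=.
    by congr (w' q _); apply: val_inj.
  rewrite (glue_fun_new u v (negbT h1)) -(Hw1 q (exist _ (factor a (val x)) isT)) /=.
  congr (w' q _); apply: val_inj => /=; symmetry; apply: factorK => //.
  exact: new_factors (valP x) (negbT h1).
Qed.

Lemma anodyne_horn_pushout (b : bool) :
  (b -> 0 < k < m) -> anodyne b (sub_incl r1 r2 hmem hthin).
Proof. by move=> hb; apply: (an_po_horn hb horn_pushout). Qed.
End HornPushout.

Section ThinPushout.
Variables (n m k : nat) (Hm : 1 < m) (Hk : k <= m) (a : sop m n) (r1 r2 : substrat n).
Hypothesis hmem : forall q (b : sop q n), smem r1 b -> smem r2 b.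
Hypothesis hthin : forall q (b : sop q n), smem r1 b -> sthin r1 b -> sthin r2 b.
Hypothesis mem_back : forall q (b : sop q n), smem r2 b -> smem r1 b.
Hypothesis mem_a : smem r1 a.
Hypothesis thin_TK'_comp : forall q (g : sop q m), TK' k g -> sthin r1 (sop_comp a g).
Hypothesis thin_TK''_comp : forall q (g : sop q m), TK'' k g -> sthin r2 (sop_comp a g).
Hypothesis new_thin_face : forall q (b : sop q n), smem r2 b -> sthin r2 b -> ~ sthin r1 b ->
  exists g : sop q m, b = sop_comp a g /\ TK'' k g.

Definition prime_fun q (y : DeltaK' Hm Hk q) : strat_of r1 q :=
  exist _ (sop_comp a (val y)) (smem_act (val y) mem_a).

Lemma prime_fun_nat q p (f : sop q p) (y : DeltaK' Hm Hk p) :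
  prime_fun (act f y) = act f (prime_fun y).
Proof. by apply: val_inj; rewrite /= sop_compA. Qed.

Lemma prime_fun_thin q (y : DeltaK' Hm Hk q) : thin y -> thin (prime_fun y).
Proof. exact: thin_TK'_comp. Qed.

Definition prime_map : smap (DeltaK' Hm Hk) (strat_of r1) :=
  MkSmap prime_fun_nat prime_fun_thin.

Definition dprime_fun q (y : DeltaK'' Hm Hk q) : strat_of r2 q :=
  exist _ (sop_comp a (val y)) (hmem (smem_act (val y) mem_a)).

Lemma dprime_fun_nat q p (f : sop q p) (y : DeltaK'' Hm Hk p) :
  dprime_fun (act f y) = act f (dprime_fun y).
Proof. by apply: val_inj; rewrite /= sop_compA. Qed.

Lemma dprime_fun_thin q (y : DeltaK'' Hm Hk q) : thin y -> thin (dprime_fun y).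
Proof. exact: thin_TK''_comp. Qed.

Definition dprime_map : smap (DeltaK'' Hm Hk) (strat_of r2) :=
  MkSmap dprime_fun_nat dprime_fun_thin.

Section ThinGlue.
Variables (E : Strat) (u : smap (DeltaK'' Hm Hk) E) (v : smap (strat_of r1) E).
Hypothesis Huv : smap_eq (smap_comp u (thin_incl Hm Hk)) (smap_comp v prime_map).

Definition thin_glue_fun q (x : strat_of r2 q) : E q :=
  v q (exist _ (val x) (mem_back (valP x))).

Lemma thin_glue_fun_nat q p (f : sop q p) (x : strat_of r2 p) :
  thin_glue_fun (act f x) = act f (thin_glue_fun x).
Proof. by rewrite /thin_glue_fun -sm_nat; congr (v q _); apply: val_inj. Qed.

Lemma thin_glue_fun_thin q (x : strat_of r2 q) : thin x -> thin (thin_glue_fun x).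
Proof.
move=> hx; case: (classic (sthin r1 (val x))) => h; first exact: sm_thin.
have [g [e hg]] := new_thin_face (valP x) hx h.
have /= e' := @Huv q (exist _ g isT).
rewrite /thin_glue_fun (_ : exist _ (val x) _ = prime_fun (exist _ g isT)).
  by rewrite -e'; apply: sm_thin.
by apply: val_inj; rewrite /= e.
Qed.

Definition thin_glue_map : smap (strat_of r2) E :=
  MkSmap thin_glue_fun_nat thin_glue_fun_thin.
End ThinGlue.

Lemma thin_pushout :
  is_pushout (thin_incl Hm Hk) prime_map dprime_map (sub_incl r1 r2 hmem hthin).
Proof.
split=> [q y|E u v Huv]; first exact: val_inj.
exists (thin_glue_map Huv); split=> [q y /=|q y /=|w' Hw1 Hw2 q x /=].
- have /= e := @Huv q (exist _ (val y) isT).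
  rewrite /thin_glue_fun (_ : exist _ _ _ = prime_fun (exist _ (val y) isT)).
    by rewrite -e; congr (u q _); apply: val_inj.
  exact: val_inj.
- by rewrite /thin_glue_fun; congr (v q _); apply: val_inj.
- rewrite /thin_glue_fun -(Hw2 q (exist _ (val x) (mem_back (valP x)))) /=.
  by congr (w' q _); apply: val_inj.
Qed.

Lemma anodyne_thin_pushout (b : bool) :
  (b -> 0 < k < m) -> anodyne b (sub_incl r1 r2 hmem hthin).
Proof. by move=> hb; apply: (an_po_thin hb thin_pushout). Qed.
End ThinPushout.


Fixpoint subsets (s : seq nat) : seq (seq nat) :=
  if s is x :: s' then [seq x :: B | B <- subsets s'] ++ subsets s' else [:: [::]].

Lemma subsets_sub s B : B \in subsets s -> {subset B <= s}.
Proof.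
elim: s B => [|x s IH] B /=; first by rewrite inE => /eqP ->.
rewrite mem_cat => /orP [/mapP [B' hB' ->]|hB] y.
  by rewrite !inE => /orP [/eqP ->|/(IH _ hB') ->]; rewrite ?eqxx ?orbT.
by rewrite inE => /(IH _ hB) ->; rewrite orbT.
Qed.

Lemma filter_in_subsets s (P : pred nat) : filter P s \in subsets s.
Proof.
elim: s => [|x s IH] /=; first by rewrite inE.
rewrite mem_cat; case: (P x); last by rewrite IH orbT.
by apply/orP; left; apply: map_f.
Qed.

Lemma subsets_before_not_sub s : uniq s -> forall p, p < size (subsets s) ->
  forall B, B \in take p (subsets s) -> has (fun y => y \notin nth [::] (subsets s) p) B.
Proof.
elim: s => [|x s IH] /=; first by move=> _ [|p] //= _ B; rewrite in_nil.
case/andP => xs us p; rewrite size_cat size_map => hp B.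
have hx : forall B', B' \in subsets s -> x \notin B'.
  by move=> B' hB'; apply/negP => /(subsets_sub hB'); rewrite (negbTE xs).
case: (ltnP p (size (subsets s))) => h1.
  rewrite take_cat size_map h1 nth_cat size_map h1 (nth_map [::]) // -map_take.
  case/mapP => B' hB' ->.
  have [y hy hny] := hasP (IH us p h1 B' hB').
  apply/hasP; exists y; first by rewrite inE hy orbT.
  rewrite inE negb_or hny andbT; apply/eqP => e; subst y.
  by move: (hx B' (mem_take hB')); rewrite hy.
rewrite take_cat size_map ltnNge h1 /= nth_cat size_map ltnNge h1 /= mem_cat.
case/orP => [/mapP [B' hB' ->]|hB].
  apply/hasP; exists x; first by rewrite inE eqxx.
  apply: hx; apply: mem_nth; by rewrite ltn_subLR.
apply: IH => //; lia.
Qed.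

Lemma subsets_before_cons s : uniq s -> forall p, p < size (subsets s) ->
  forall x, x \in s -> x \notin nth [::] (subsets s) p ->
  has (fun B => all (fun y => (y == x) || (y \in nth [::] (subsets s) p)) B) (take p (subsets s)).
Proof.
elim: s => [|x s IH] /=; first by move=> _ p _ x; rewrite in_nil.
case/andP => xs us p; rewrite size_cat size_map => hp x0 hx0.
case: (ltnP p (size (subsets s))) => h1.
  rewrite take_cat size_map h1 nth_cat size_map h1 (nth_map [::]) // -map_take.
  rewrite inE negb_or => /andP [nx nx0].
  move: hx0; rewrite inE (negbTE nx) /= => hx0.
  have [B' hB' hall] := hasP (IH us p h1 x0 hx0 nx0).
  apply/hasP; exists (x :: B'); first by apply/mapP; exists B'.
  rewrite /= inE eqxx orbT /=; apply/allP => y hy.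
  by move/allP: hall => /(_ y hy) /orP [->|h] //; rewrite inE h !orbT.
rewrite take_cat size_map ltnNge h1 /= nth_cat size_map ltnNge h1 /= => nx0.
rewrite has_cat; case: (eqVneq x0 x) => [ex|nex].
  subst x0; apply/orP; left; apply/hasP.
  exists (x :: nth [::] (subsets s) (p - size (subsets s))).
    by apply: map_f; apply: mem_nth; rewrite ltn_subLR.
  by rewrite /= eqxx /=; apply/allP => y hy; rewrite hy orbT.
apply/orP; right; apply: IH => //; first by rewrite ltn_subLR.
by move: hx0; rewrite inE (negbTE nex).
Qed.

Lemma sep_trans : transitive (fun a b : nat => a.+1 < b).
Proof. by move=> y x z /=; lia. Qed.

Lemma sep_head_le_last k1 ks : sorted (fun a b => a.+1 < b) (k1 :: ks) -> k1 <= last k1 ks.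
Proof.
move=> hs; have := mem_last k1 ks; rewrite inE => /orP [/eqP ->//|h].
by have /allP /(_ _ h) /= := order_path_min sep_trans hs; lia.
Qed.

Section Main.
Variables (n k1 : nat) (ks : seq nat).
Hypothesis n_gt0 : 0 < n.
Hypothesis k_sorted : sorted (fun a b => a.+1 < b) (k1 :: ks).
Hypothesis k_bounded : all (fun k => k <= n) (k1 :: ks).
Variable N : entire n.
Hypothesis N_complicial : complicial (k1 :: ks) N.

Definition vK : pred nat := fun k => k \in k1 :: ks.
Definition Aseq := subsets ks.

Lemma ks_gt x : x \in ks -> k1.+1 < x.
Proof. by move=> hx; have /allP := order_path_min sep_trans k_sorted; apply. Qed.

Lemma k1_le_n : k1 <= n. Proof. by case/andP: k_bounded. Qed.

Lemma ks_le x : x \in ks -> x <= n.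
Proof. by move=> hx; case/andP: k_bounded => _ /allP; apply. Qed.

Lemma uniq_ks : uniq ks.
Proof.
apply: (sorted_uniq sep_trans) => [x /=|]; first lia.
by move: k_sorted => /= /path_sorted.
Qed.

Lemma k1_notin : k1 \notin ks.
Proof. by apply/negP => /ks_gt; lia. Qed.

Lemma vK_k1 : vK k1. Proof. exact: mem_head. Qed.

Lemma vK_ks x : vK x -> x != k1 -> x \in ks.
Proof. by rewrite /vK inE => /orP [->|]. Qed.

Lemma thin_admissible q (b : sop q n) : admissible k1 b -> ethin N b.
Proof. exact: (N_complicial (mem_head _ _)).1. Qed.

Lemma thin_adjacent_face m (a : sop m n) (l i : 'I_m.+1) q q' (g0 : sop q m) (g : sop q' m) :
  admissible k1 a -> (ap a l : nat) = k1 -> is_face g0 l -> ethin N (sop_comp a g0) ->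
  is_face g i -> (i.+1 == l) || (i == l.+1 :> nat) -> ethin N (sop_comp a g).
Proof.
case: m a l i g0 g => [|r] a l i g0 g ha hl [e0 h0] he [e h] hil //.
have eq0 : q = r by case: e0.
have eq1 : q' = r by case: e.
subst q q'.
have eg0 : g0 = face l by apply: sop_ext => j; rewrite h0 /= faceE.
have -> : g = face i by apply: sop_ext => j; rewrite h /= faceE.
rewrite eg0 in he; exact: (N_complicial (mem_head k1 ks)).2 _ _ ha _ hl he _ hil.
Qed.

Definition filt (p : nat) q (b : sop q n) : bool :=
  hornS vK b || has (fun B => avoids B b) (take p Aseq).

Lemma filt_act p q p' (f : sop q p') (b : sop p' n) : filt p b -> filt p (sop_comp b f).
Proof.
case/orP => [h|/hasP [B hB h]]; first by rewrite /filt (hornS_closed f h).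
by apply/orP; right; apply/hasP; exists B => //; apply: avoids_act.
Qed.

Lemma filtS p q (b : sop q n) : p < size Aseq ->
  filt p.+1 b = filt p b || avoids (nth [::] Aseq p) b.
Proof. by move=> hp; rewrite /filt (take_nth [::] hp) has_rcons orbA orbAC. Qed.

Lemma filt_mono p q (b : sop q n) : filt p b -> filt p.+1 b.
Proof.
case: (ltnP p (size Aseq)) => hp; first by rewrite filtS // => ->.
by rewrite /filt !take_oversize //; lia.
Qed.

(* b is the k_1-face of α_A, for A the p-th subset of ks. *)
Definition k1_face (p : nat) q (b : sop q n) : Prop :=
  ~ @degen (Delta_sSet n) _ b /\
  forall x, inim b x = (x <= n) && (x \notin nth [::] Aseq p) && (x != k1).

Definition even_stage (p : nat) : substrat n :=
  Substrat (@filt_act p) (@ethin_degen n N) (@ethin0 n N).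

Definition odd_thin p q (b : sop q n) : Prop :=
  ethin N b /\ (filt p b \/ ~ k1_face p b).

Lemma odd_thin_degen p q (b : sop q n) : @degen (Delta_sSet n) _ b -> odd_thin p b.
Proof. by move=> hd; split; [exact: ethin_degen | right; case]. Qed.

Lemma odd_thin0 p (b : sop 0 n) : ~ odd_thin p b.
Proof. by case=> /ethin0. Qed.

(* The simplices of stage p + 1, thin as in N except the k_1-face of α_A. *)
Definition odd_stage (p : nat) : substrat n :=
  Substrat (@filt_act p.+1) (@odd_thin_degen p) (@odd_thin0 p).

(* a stands for α_A; only the properties below are used. *)
Section Alpha.
Variables (p : nat) (Hp : p < size Aseq) (m : nat) (a : sop m n).
Local Notation A := (nth [::] Aseq p).
Hypothesis a_smono : smono a.
Hypothesis a_image : forall x, inim a x = (x <= n) && (x \notin A).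
Hypothesis a_init : forall i : 'I_m.+1, i <= k1.+1 -> (ap a i : nat) = i.
Hypothesis k1_le_m : k1 <= m.
Hypothesis k1_lt_m : k1 < n -> k1 < m.
Hypothesis m_gt0 : 0 < m.

Lemma A_ks x : x \in A -> x \in ks.
Proof. exact: (subsets_sub (mem_nth [::] Hp)). Qed.

Lemma A_vK x : x \in A -> vK x.
Proof. by move/A_ks => h; rewrite /vK inE h orbT. Qed.

Definition k1' : 'I_m.+1 := inord k1.

Lemma k1'E : (k1' : nat) = k1.
Proof. by rewrite inordK // ltnS. Qed.

Lemma a_k1 : (ap a k1' : nat) = k1.
Proof. by rewrite a_init k1'E. Qed.

Lemma a_eq_k1 j : (ap a j : nat) = k1 -> j = k1'.
Proof.
move=> e; apply: (smono_inj a_smono); apply: val_inj => /=.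
by rewrite e -a_k1.
Qed.

Lemma a_hit x : x <= n -> x \notin A -> exists j, (ap a j : nat) = x.
Proof. by move=> h1 h2; apply/inimP; rewrite a_image h1 h2. Qed.

Lemma inim_a x : inim a x -> (x <= n) && (x \notin A).
Proof. by rewrite a_image. Qed.

Lemma inim_comp_a q (g : sop q m) (j : 'I_m.+1) : inim (sop_comp a g) (ap a j) = inim g j.
Proof.
rewrite inim_comp; apply/existsP/idP => [[j' /andP [/eqP e h]]|h].
  suff -> : j = j' by [].
  by apply: (smono_inj a_smono); apply: val_inj.
by exists j; rewrite eqxx h.
Qed.

Lemma hornS_of_not_inim_comp q (g : sop q m) x : x <= n -> x \notin A -> x != k1 ->
  ~~ inim (sop_comp a g) x -> hornS (pred1 k1) g.
Proof.
move=> xn xA xk1 xg; have [j ej] := a_hit xn xA.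
apply/hornSP; exists j; split; first by rewrite -inim_comp_a ej.
apply/negP => /eqP jk1; have jk1' : j = k1' by apply: val_inj; rewrite /= jk1 k1'E.
by move: xk1; rewrite -ej jk1' a_k1 eqxx.
Qed.

Lemma filt_comp_hornS q (g : sop q m) : filt p (sop_comp a g) -> hornS (pred1 k1) g.
Proof.
case/orP=> [/hornSP [x [xg xK]]|/hasP [B hB /allP Bg]].
  apply: (hornS_of_not_inim_comp (ltn_ord x)) xg.
    by apply: contra xK => /A_vK.
  by apply: contra xK => /eqP ->; exact: vK_k1.
have [y yB yA] := hasP (subsets_before_not_sub uniq_ks Hp hB).
have yks : y \in ks by apply: (subsets_sub (mem_take hB)).
apply: (hornS_of_not_inim_comp (ks_le yks) yA _ (Bg y yB)).
by apply: contraNneq k1_notin => <-.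
Qed.

Lemma hornS_filt_comp q (g : sop q m) : hornS (pred1 k1) g -> filt p (sop_comp a g).
Proof.
move/hornSP => [j [jg jk1]].
have xg : ~~ inim (sop_comp a g) (ap a j) by rewrite inim_comp_a.
have xk1 : (ap a j : nat) != k1.
  by apply: contra jk1 => /eqP /a_eq_k1 ->; rewrite /= k1'E.
have /andP [_ xA] := inim_a (introT (inimP _ _) (ex_intro _ j erefl)).
case: (boolP (vK (ap a j))) => xK; last by apply/orP; left; apply/hornSP; exists (ap a j).
have [B hB BA] := hasP (subsets_before_cons uniq_ks Hp (vK_ks xK xk1) xA).
apply/orP; right; apply/hasP; exists B => //; apply/allP => y yB.
case/orP: (allP BA y yB) => [/eqP -> //|yA].
by apply/negP => /inim_comp_sub /inim_a /andP [_]; rewrite yA.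
Qed.

Lemma filt_comp q (g : sop q m) : filt p (sop_comp a g) = hornS (pred1 k1) g.
Proof. by apply/idP/idP; [apply: filt_comp_hornS | apply: hornS_filt_comp]. Qed.

Lemma avoids_factor q (b : sop q n) : avoids A b -> forall i, exists j, ap a j = ap b i.
Proof.
move=> /allP hin i.
have hA : (ap b i : nat) \notin A.
  apply/negP => /hin /negP; apply; apply/inimP; by exists i.
have [j ej] := a_hit (ltn_ord (ap b i)) hA.
by exists j; apply: val_inj.
Qed.

Lemma avoids_comp q (g : sop q m) : avoids A (sop_comp a g).
Proof.
apply/allP => x hx; apply/negP => /inim_comp_sub /inim_a /andP [_]; by rewrite hx.
Qed.

Lemma new_factors q (b : sop q n) : filt p.+1 b -> ~~ filt p b ->
  forall i, exists j, ap a j = ap b i.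
Proof. by rewrite filtS // => /orP [->//|h] _; apply: avoids_factor. Qed.

Lemma filtS_comp q (g : sop q m) : filt p.+1 (sop_comp a g).
Proof. by rewrite filtS // avoids_comp orbT. Qed.

Lemma adm_comp q (g : sop q m) : adm k1 g -> adm k1 (sop_comp a g).
Proof.
move=> h j hj.
have jm : j <= m.
  case: (ltnP k1 j) => h1.
    have : (j : nat) = k1.+1 by lia.
    move=> e; have := ltn_ord j; rewrite e ltnS => /k1_lt_m; lia.
  lia.
have [|i ei] := h (inord j); first by rewrite inordK.
exists i; apply: val_inj; rewrite apE ei /= a_init inordK //; lia.
Qed.

Lemma thin_adm_comp q (g : sop q m) : TK k1 g -> ethin N (sop_comp a g).
Proof.
case => [hd|had]; first by apply: ethin_degen; exact: degen_comp.
case: (classic (@degen (Delta_sSet n) _ (sop_comp a g))) => hd.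
  exact: ethin_degen.
by apply: thin_admissible; split => //; apply: adm_comp.
Qed.

Lemma inim_k1 q (g : sop q m) : inim g k1' -> inim (sop_comp a g) k1.
Proof. by move=> h; rewrite -a_k1 inim_comp_a. Qed.

Lemma TK_not_k1_face q (g : sop q m) : TK k1 g -> ~ k1_face p (sop_comp a g).
Proof.
move=> hT [hnd he]; have := he k1; rewrite eqxx andbF.
case: hT => [hd|had]; first by case: hnd; exact: degen_comp.
have [|i ei] := had k1'; first by rewrite k1'E; apply/andP; split; lia.
by rewrite inim_k1 //; apply/inimP; exists i; rewrite ei.
Qed.

Lemma nhorn_inim q (g : sop q m) : ~~ hornS (pred1 k1) g ->
  forall j : 'I_m.+1, j != k1' -> inim g j.
Proof.
rewrite hornS_iff negb_exists => /forallP h j hj.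
have := h j; rewrite negb_and !negbK => /orP [->//|/eqP e].
by case/eqP: hj; apply: val_inj; rewrite /= k1'E e.
Qed.

Lemma k1_face_comp q (g : sop q m) : ~~ hornS (pred1 k1) g -> ~~ inim g k1' ->
  ~ @degen (Delta_sSet n) _ (sop_comp a g) -> k1_face p (sop_comp a g).
Proof.
move=> /nhorn_inim g_onto g_k1 nondeg; split=> // x; apply/idP/idP.
  move=> hx; have /andP [-> ->] := inim_a (inim_comp_sub hx).
  by apply: contraNneq g_k1 => ex; move: hx; rewrite ex -a_k1 inim_comp_a.
case/andP => /andP [xn xA] xk1; have [j ej] := a_hit xn xA; subst x.
rewrite inim_comp_a; apply: g_onto.
by apply/negP => /eqP jk1; move: xk1; rewrite jk1 a_k1 eqxx.
Qed.

Lemma new_thin_factor q (b : sop q n) : filt p.+1 b -> odd_thin p b -> ~~ filt p b ->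
  TK k1 (factor a b).
Proof.
move=> hS [_ hE] hn.
have eK := factorK a_smono (new_factors hS hn).
set g := factor a b in eK *.
have hnE : ~ k1_face p b by case: hE => // h; move: hn; rewrite h.
rewrite -eK filt_comp in hn.
case: (boolP (inim g k1')) => hk.
  right => j hj.
  have : inim g (inord j : 'I_m.+1).
    by case: (eqVneq (inord j : 'I_m.+1) k1') => [->|]; last exact: nhorn_inim.
  by case/inimP => i ei; exists i; apply: val_inj; rewrite /= ei inordK.
left; apply: (degen_compK a_smono); rewrite eK.
by apply: NNPP => hnd; apply: hnE; rewrite -eK; apply: k1_face_comp; rewrite ?eK.
Qed.
Definition k1_face_thin := exists q (g : sop q m), is_face g k1' /\ ethin N (sop_comp a g).

Lemma m_range (j : nat) : k1.-1 <= j <= k1.+1 -> j <= n -> j <= m.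
Proof.
move=> /andP [h1 h2] hj; case: (ltnP k1 j) => h3; last lia.
have e : j = k1.+1 by lia.
have h4 : k1 < n by lia.
have := k1_lt_m h4; lia.
Qed.

Lemma a_adm : admissible k1 a.
Proof.
split; first exact: smono_nondeg.
move=> j hj; have jm := m_range hj (ltn_ord j).
exists (inord j); apply: val_inj; rewrite /= a_init inordK //; case/andP: hj => _; lia.
Qed.

Lemma thin_other_face (hE : k1_face_thin) q (g : sop q m) (i : 'I_m.+1) :
  (i : nat) != k1 -> is_face g i -> ethin N (sop_comp a g).
Proof.
move=> hik hf.
have [q0 [g0 [hf0 ht0]]] := hE.
case: (eqVneq (i : nat) k1.+1) => hi1.
  apply: (thin_adjacent_face a_adm a_k1 hf0 ht0 hf); by rewrite k1'E hi1 eqxx orbT.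
case: (boolP ((0 < k1) && ((i : nat) == k1.-1))) => hi2.
  apply: (thin_adjacent_face a_adm a_k1 hf0 ht0 hf); case/andP: hi2 => h0 /eqP ->.
  by rewrite k1'E prednK // eqxx.
apply: thin_admissible; split.
  exact/smono_nondeg/smono_comp/(is_face_smono hf).
move=> j hj; have jm := m_range hj (ltn_ord j).
have hji : (inord j : 'I_m.+1) != i.
  apply/negP => /eqP e; move: hik hi1 hi2; rewrite -e inordK //; case/andP: hj; lia.
have [t et] := is_face_hit hf hji.
exists t; apply: val_inj; rewrite apE et /= a_init inordK //; case/andP: hj => _; lia.
Qed.

Lemma is_face_k1_hit q (g : sop q m) (i : 'I_m.+1) : (i : nat) != k1 -> is_face g i ->
  inim (sop_comp a g) k1.
Proof.
move=> hik hf; apply: inim_k1.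
have : k1' != i by apply/negP => /eqP e; move: hik; rewrite -e k1'E eqxx.
move=> /(is_face_hit hf) [j ej]; apply/inimP; exists j; by rewrite ej.
Qed.

Lemma k1_faceE q (b : sop q n) : k1_face p b ->
  sop_comp a (factor a b) = b /\ is_face (factor a b) k1'.
Proof.
case=> hnd he.
have hin : avoids A b.
  apply/allP => x hx; apply/negP; rewrite he hx /= andbF; by [].
have eK := factorK a_smono (avoids_factor hin); split => //.
apply: is_face_of_image => //; last first.
  by move=> hd; apply: hnd; rewrite -eK; apply: degen_comp.
move=> j.
have hj : inim (factor a b) j = (j != k1').
  rewrite -inim_comp_a eK he.
  have /andP [-> ->] /= : ((ap a j : nat) <= n) && ((ap a j : nat) \notin A).
    by apply: inim_a; apply/inimP; exists j.
  apply/idP/idP => [h|h]; apply/negP => /eqP e.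
    by move: h; rewrite e a_k1 eqxx.
  by move: h; rewrite (a_eq_k1 e) eqxx.
split.
  case=> i ei; apply/eqP; rewrite -hj; apply/inimP; exists i; by rewrite ei.
move/eqP; rewrite -hj => /inimP [i ei]; exists i; exact: val_inj.
Qed.

Lemma thin_TK'_comp (hE : k1_face_thin) q (g : sop q m) : TK' k1 g ->
  odd_thin p (sop_comp a g).
Proof.
case=> [hT|[i [hik hf]]].
  by split; [exact: thin_adm_comp | right; exact: TK_not_k1_face].
split; first (apply: (thin_other_face hE) hik hf).
right => [[_ he]]; move: (is_face_k1_hit hik hf); by rewrite he eqxx andbF.
Qed.

Lemma thin_TK''_comp (hE : k1_face_thin) q (g : sop q m) : TK'' k1 g ->
  ethin N (sop_comp a g).
Proof.
case=> [hT|[i hf]]; first exact: thin_adm_comp.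
case: (eqVneq (i : nat) k1) => hik; last by apply: (thin_other_face hE) hik hf.
have ei : i = k1' by apply: val_inj; rewrite /= hik k1'E.
subst i.
have [q0 [g0 [hf0 ht0]]] := hE.
case: hf => e h; case: hf0 => e0 h0.
have eq : q = q0 by move: e e0; lia.
subst q0.
suff -> : g = g0 by [].
by apply: sop_ext => j; rewrite h h0.
Qed.

Lemma new_thin_face q (b : sop q n) : filt p.+1 b -> ethin N b -> ~ odd_thin p b ->
  exists g : sop q m, b = sop_comp a g /\ TK'' k1 g.
Proof.
move=> hS ht hn.
have hE : k1_face p b by apply: NNPP => hE; apply: hn; split => //; right.
have [eK hf] := k1_faceE hE.
by exists (factor a b); split; [rewrite eK | right; exists k1'].
Qed.

Lemma k1_face_not_thin (hE : ~ k1_face_thin) q (b : sop q n) :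
  ethin N b -> k1_face p b -> False.
Proof.
move=> ht he; have [eK hf] := k1_faceE he.
by apply: hE; exists q, (factor a b); split => //; rewrite eK.
Qed.

Lemma anodyne_even_odd (bb : bool) hmem hthin :
  (bb -> 0 < k1 < m) -> anodyne bb (sub_incl (even_stage p) (odd_stage p) hmem hthin).
Proof.
apply: (anodyne_horn_pushout m_gt0 k1_le_m a_smono hmem hthin
  (fun q g => filt_comp g) (fun q b => @new_factors q b) (fun q g _ h => thin_adm_comp h)
  (fun q g => filtS_comp g) (fun q g h => conj (thin_adm_comp h) (or_intror (TK_not_k1_face h)))
  (fun q b => @new_thin_factor q b) (fun q b _ h => proj1 h)).
Qed.

Lemma filtS_a : filt p.+1 a.
Proof. by rewrite filtS //; apply/orP; right; apply/allP => x hx; rewrite a_image hx andbF. Qed.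

Lemma anodyne_odd_even (bb : bool) hmem hthin :
  (bb -> 0 < k1 < m) -> anodyne bb (sub_incl (odd_stage p) (even_stage p.+1) hmem hthin).
Proof.
move=> hb; case: (classic k1_face_thin) => hE.
  have Hm : 1 < m.
    have [[|q0] [g0 [[e0 _] ht0]]] := hE; last lia.
    by case: (ethin0 ht0).
  exact: (anodyne_thin_pushout Hm k1_le_m hmem hthin (fun q b h => h) filtS_a
    (fun q g h => thin_TK'_comp hE h) (fun q g h => thin_TK''_comp hE h)
    (fun q b => @new_thin_face q b) hb).
(* Otherwise the two stages coincide. *)
have e : odd_stage p = even_stage p.+1.
  apply: substrat_ext => // q b /=; split=> [[]//|ht].
  by split=> //; right => /(k1_face_not_thin hE ht).
exact: (anodyne_sub_incl_congr hmem hthin (erefl (odd_stage p)) e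
  (anodyne_sub_refl _ (fun q b h => h) (fun q b _ h => h))).
Qed.
End Alpha.

(* α_A lists [n] \ A increasingly; as A ⊆ ks, it starts with 0, ..., k_1 + 1. *)
Section Enum.
Variable A : seq nat.
Hypothesis hA : forall x, x \in A -> x \in ks.

Definition compl_seq := [seq x <- iota 0 n.+1 | x \notin A].
Definition mA := (size compl_seq).-1.
Definition init_len := minn k1.+2 n.+1.

Lemma compl_seq_split : exists rest, compl_seq = iota 0 init_len ++ rest.
Proof.
rewrite /compl_seq (_ : n.+1 = init_len + (n.+1 - init_len)); last by rewrite /init_len; lia.
rewrite iotaD filter_cat; eexists; congr (_ ++ _).
apply/all_filterP/allP => x; rewrite mem_iota /= => hx.
apply/negP => /hA /ks_gt; rewrite /init_len in hx; lia.
Qed.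

Lemma compl_seq_size : init_len <= size compl_seq.
Proof. by have [r ->] := compl_seq_split; rewrite size_cat size_iota leq_addr. Qed.

Lemma init_len_ge2 : 2 <= init_len.
Proof. by rewrite /init_len; lia. Qed.

Lemma mA_size : mA.+1 = size compl_seq.
Proof. by rewrite /mA prednK //; have := compl_seq_size; have := init_len_ge2; lia. Qed.

Lemma compl_seq_sorted : sorted ltn compl_seq.
Proof. exact: (sorted_filter ltn_trans _ (iota_ltn_sorted 0 n.+1)). Qed.

Lemma compl_seq_le i : nth 0 compl_seq i <= n.
Proof.
case: (ltnP i (size compl_seq)) => h; last by rewrite nth_default.
by have := mem_nth 0 h; rewrite mem_filter mem_iota add0n ltnS => /and3P [].
Qed.

Lemma compl_seq_init i : i < init_len -> nth 0 compl_seq i = i.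
Proof. by move=> h; have [r ->] := compl_seq_split; rewrite nth_cat size_iota h nth_iota. Qed.

Definition alphaf : {ffun 'I_mA.+1 -> 'I_n.+1} :=
  [ffun i : 'I_mA.+1 => inord (nth 0 compl_seq i)].

Lemma alpha_val (i : 'I_mA.+1) : (alphaf i : nat) = nth 0 compl_seq i.
Proof. by rewrite ffunE inordK // ltnS compl_seq_le. Qed.

Lemma compl_seq_lt (i j : 'I_mA.+1) : i < j -> nth 0 compl_seq i < nth 0 compl_seq j.
Proof.
move=> h; apply: (sorted_ltn_nth ltn_trans 0 compl_seq_sorted) => //; rewrite inE -mA_size.
exact: ltn_ord. exact: ltn_ord.
Qed.

Lemma monob_alpha : monob alphaf.
Proof.
apply/forallP => i; apply/forallP => j; apply/implyP => hij; rewrite !alpha_val.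
case: (ltngtP i j) hij => // [h|h] _; first exact: ltnW (compl_seq_lt h).
by rewrite (_ : i = j) //; apply: val_inj.
Qed.

Definition alpha : sop mA n := exist (@monob mA n) _ monob_alpha.

Lemma alphaE (i : 'I_mA.+1) : (ap alpha i : nat) = nth 0 compl_seq i.
Proof. exact: alpha_val. Qed.

Lemma alpha_smono : smono alpha.
Proof. by move=> i j h; rewrite !alphaE; apply: compl_seq_lt. Qed.

Lemma alpha_image x : inim alpha x = (x <= n) && (x \notin A).
Proof.
apply/inimP/idP => [[i e]|h].
  have : x \in compl_seq by rewrite -e alphaE mem_nth // -mA_size.
  by rewrite mem_filter mem_iota add0n ltnS => /andP [-> /andP [_ ->]].
have hx : x \in compl_seq by case/andP: h => h1 h2; rewrite mem_filter mem_iota add0n ltnS h1 h2.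
have hi : index x compl_seq < mA.+1 by rewrite mA_size index_mem.
by exists (Ordinal hi); rewrite alphaE nth_index.
Qed.

Lemma alpha_init (i : 'I_mA.+1) : i <= k1.+1 -> (ap alpha i : nat) = i.
Proof.
move=> h; rewrite alphaE compl_seq_init // /init_len.
have hs : (i : nat) < size compl_seq by rewrite -mA_size; exact: ltn_ord.
have hl : size compl_seq <= n.+1.
  by rewrite /compl_seq size_filter; apply: leq_trans (count_size _ _) _; rewrite size_iota.
lia.
Qed.

Lemma k1_le_mA : k1 <= mA.
Proof. have := compl_seq_size; rewrite -mA_size /init_len; have := k1_le_n; lia. Qed.

Lemma k1_lt_mA : k1 < n -> k1 < mA.
Proof. have := compl_seq_size; rewrite -mA_size /init_len; lia. Qed.

Lemma mA_gt0 : 0 < mA.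
Proof. have := compl_seq_size; have := init_len_ge2; rewrite -mA_size; lia. Qed.
End Enum.

Definition filtration (i : nat) : substrat n :=
  if odd i then odd_stage i./2 else even_stage i./2.

Lemma filtration_even p : filtration p.*2 = even_stage p.
Proof. by rewrite /filtration odd_double doubleK. Qed.

Lemma filtration_odd p : filtration p.*2.+1 = odd_stage p.
Proof. by rewrite /filtration /= odd_double /= uphalf_double. Qed.

Lemma filtration_evenS p : filtration p.*2.+2 = even_stage p.+1.
Proof. by rewrite -doubleS filtration_even. Qed.

Lemma split_parity i : exists p, i = p.*2 \/ i = p.*2.+1.
Proof.
have e := odd_double_half i; exists i./2.
by case: (odd i) e => /= e; [right|left]; rewrite -{1}e.
Qed.

Lemma filtration_mem i q (b : sop q n) : smem (filtration i) b -> smem (filtration i.+1) b.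
Proof.
have [p [->|->]] := split_parity i.
  by rewrite filtration_even filtration_odd; apply: filt_mono.
by rewrite filtration_odd filtration_evenS.
Qed.

Lemma filtration_thin i q (b : sop q n) :
  smem (filtration i) b -> sthin (filtration i) b -> sthin (filtration i.+1) b.
Proof.
have [p [->|->]] := split_parity i.
  by rewrite filtration_even filtration_odd /= => hs ht; split => //; left.
by rewrite filtration_odd filtration_evenS /= => _ [].
Qed.

Lemma inner_mA (bb : bool) A : (forall x, x \in A -> x \in ks) ->
  (bb -> 0 < k1 < n) -> bb -> 0 < k1 < mA A.
Proof. by move=> hA hb /hb /andP [k1_gt0 k1n]; rewrite k1_gt0 (k1_lt_mA hA k1n). Qed.

Lemma anodyne_even_step (bb : bool) p hmem hthin : p < size Aseq -> (bb -> 0 < k1 < n) ->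
  anodyne bb (sub_incl (even_stage p) (odd_stage p) hmem hthin).
Proof.
move=> hp hb; have hA := A_ks hp.
exact: (anodyne_even_odd hp (alpha_smono hA) (alpha_image hA) (@alpha_init _ hA)
  (k1_le_mA hA) (@k1_lt_mA _ hA) (mA_gt0 hA) _ _ (inner_mA hA hb)).
Qed.

Lemma anodyne_odd_step (bb : bool) p hmem hthin : p < size Aseq -> (bb -> 0 < k1 < n) ->
  anodyne bb (sub_incl (odd_stage p) (even_stage p.+1) hmem hthin).
Proof.
move=> hp hb; have hA := A_ks hp.
exact: (anodyne_odd_even hp (alpha_smono hA) (alpha_image hA) (@alpha_init _ hA)
  (k1_le_mA hA) (@k1_lt_mA _ hA) (mA_gt0 hA) _ _ (inner_mA hA hb)).
Qed.

Lemma anodyne_filtration (bb : bool) : (bb -> 0 < k1 < n) -> forall hmem hthin,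
  anodyne bb (sub_incl (filtration 0) (filtration (size Aseq).*2) hmem hthin).
Proof.
move=> hb.
apply: (@anodyne_chain n (size Aseq).*2 filtration filtration_mem filtration_thin) => i hi.
have [p [ei|ei]] := split_parity i; subst i.
- have hp : p < size Aseq by move: hi; rewrite ltn_double.
  have mem_step q (b : sop q n) : smem (even_stage p) b -> smem (odd_stage p) b := @filt_mono p q b.
  have thin_step q (b : sop q n) : smem (even_stage p) b -> sthin (even_stage p) b ->
      sthin (odd_stage p) b := fun h ht => conj ht (or_introl h).
  apply: (anodyne_sub_incl_congr _ _ (esym (filtration_even p)) (esym (filtration_odd p))).
  exact: (anodyne_even_step mem_step thin_step hp hb).
- have hp : p < size Aseq by move: hi; rewrite -doubleS leq_double.
  have mem_step q (b : sop q n) : smem (odd_stage p) b -> smem (even_stage p.+1) b := id.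
  have thin_step q (b : sop q n) : smem (odd_stage p) b -> sthin (odd_stage p) b ->
      sthin (even_stage p.+1) b := fun _ ht => proj1 ht.
  apply: (anodyne_sub_incl_congr _ _ (esym (filtration_odd p)) (esym (filtration_evenS p))).
  exact: (anodyne_odd_step mem_step thin_step hp hb).
Qed.

Lemma filtration0 : filtration 0 = horn_substrat (fun k => k \in k1 :: ks) N.
Proof. by apply: substrat_ext => // q b; rewrite /= /filt take0 orbF. Qed.

(* Every simplex avoids the elements of ks missing from its image. *)
Lemma filtration_last : filtration (size Aseq).*2 = full_substrat N.
Proof.
rewrite filtration_even; apply: substrat_ext => // q b /=.
rewrite /filt take_size; case: (hornS vK b) => //=.
apply/hasP; exists (filter (fun y => ~~ inim b y) ks); first exact: filter_in_subsets.
by apply/allP => y; rewrite mem_filter => /andP [].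
Qed.

Lemma anodyne_LamN_incl (bb : bool) : (bb -> 0 < k1 < n) ->
  anodyne bb (LamN_incl (fun k => k \in k1 :: ks) N).
Proof.
move=> hb; rewrite (LamN_inclE (fun _ _ _ => isT) (fun _ _ _ h => h)).
have := anodyne_filtration hb (chain_mem_mono filtration_mem (leq0n _))
                             (chain_thin_mono filtration_mem filtration_thin (leq0n _)).
exact: anodyne_sub_incl_congr filtration0 filtration_last.
Qed.
End Main.

Theorem mainTheorem2 (n : nat) (Hn : 1 <= n) (k1 : nat) (ks : seq nat)
  (Hsort : sorted (fun a b => a.+1 < b) (k1 :: ks))
  (Hbound : all (fun k => k <= n) (k1 :: ks))
  (N : entire n) (HN : complicial (k1 :: ks) N) :
  anodyne false (LamN_incl (fun k => k \in k1 :: ks) N) /\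
  (0 < k1 -> last k1 ks < n ->
     anodyne true (LamN_incl (fun k => k \in k1 :: ks) N)).
Proof.
split; first exact: anodyne_LamN_incl.
move=> k1_gt0 last_lt_n; apply: anodyne_LamN_incl => // _.
by rewrite k1_gt0 (leq_ltn_trans (sep_head_le_last Hsort) last_lt_n).
Qed.
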